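(* Let $\mathcal{X}\subseteq\mathbb{R}^d$ be a feature space and $\mathcal{Y}\subseteq\mathbb{R}$ a label space. Let $p(\bm{x},y)$ be a data distribution on $\mathcal{X}\times\mathcal{Y}$, and let partial-label examples $(\bm{x},S)$ be drawn from a distribution $p(\bm{x},S)$, where $S\subseteq\mathcal{Y}$ is a set of real-valued candidate labels that always contains the true label $y$ of $\bm{x}$. Assume the ambiguity degree $$\gamma=\sup_{(\bm{x},y)\sim p(\bm{x},y),\,(\bm{x},S)\sim p(\bm{x},S),\,y'\in\mathcal{Y},\,y'\neq y} p(y'\in S)$$ satisfies $\gamma<1$. Let $\ell:\mathbb{R}\times\mathbb{R}\to\mathbb{R}_+$ be a regression loss, $\mathcal{F}$ a hypothesis space of models $f:\mathcal{X}\to\mathbb{R}$, $R(f)=\mathbb{E}_{p(\bm{x},y)}[\ell(f(\bm{x}),y)]$, and $f^\star=\arg\min_{f\in\mathcal{F}}R(f)$, where it is assumed that $R(f^\star)=0$. Define $\ell_{\min}(f(\bm{x}),S)=\min_{y\in S}\ell(f(\bm{x}),y)$ and $R_{\min}(f)=\mathbb{E}_{p(\bm{x},S)}[\ell_{\min}(f(\bm{x}),S)]$. Then the model $f^\star_{\min}=\arg\min_{f\in\mathcal{F}}R_{\min}(f)$ is equivalent to the optimal model $f^\star$.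
   Context: This is the partial-label regression setting: each training instance is annotated with a set of real-valued candidate labels, exactly one of which (the true label) is correct and it is always contained in the set. The hypothesis space $\mathcal{F}$ is assumed to be rich enough that the optimal fully-supervised risk is zero. *)

From HB Require Import structures.
From mathcomp Require Import all_boot all_order all_algebra.
From mathcomp Require Import all_classical all_reals all_analysis ess_sup_inf kernel.
Set Implicit Arguments. Unset Strict Implicit. Unset Printing Implicit Defensive.
Import Order.TTheory GRing.Theory Num.Theory.
Local Open Scope classical_set_scope.
Local Open Scope ring_scope.
Local Open Scope ereal_scope.

(* Candidate label sets are finite sets of reals, represented as sequences.
   A "random candidate set" is a map cand : O -> seq R from a measurable space
   that is measurable for the natural (disjoint-union-of-R^n) structure on
   seq R: its size and each of its coordinates are measurable. *)
Definition measurable_candidates {dO} {O : measurableType dO} {R : realType}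
  (cand : O -> seq R) : Prop :=
  (forall n : nat, measurable [set w | size (cand w) = n]) /\
  (forall k : nat, measurable_fun setT (fun w => nth 0%R (cand w) k)).

(* l_min(a, S) = min_{y in S} l(a, y)  (+oo for the empty set, never used
   since S always contains the true label). *)
Definition lmin {R : realType} (l : R -> R -> R) (a : R) (s : seq R) : \bar R :=
  \big[Order.min/+oo]_(y <- s) (l a y)%:E.

Definition risk {dT} {T : measurableType dT} {R : realType}
  (P : probability (T * R)%type R) (l : R -> R -> R) (f : T -> R) : \bar R :=
  \int[P]_z (l (f z.1) z.2)%:E.

(* R_min(f) = E_{p(x,S)} [ l_min(f(x), S) ], where (x,y) ~ P and the
   candidate set S = cand w with w ~ Q (x,y). *)
Definition risk_min {dT dO} {T : measurableType dT} {O : measurableType dO}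
  {R : realType} (P : probability (T * R)%type R) (Q : R.-pker (T * R)%type ~> O)
  (cand : O -> seq R) (l : R -> R -> R) (f : T -> R) : \bar R :=
  \int[P]_z \int[Q z]_w lmin l (f z.1) (cand w).

Definition ambiguity_degree {dT dO} {T : measurableType dT}
  {O : measurableType dO} {R : realType} (P : probability (T * R)%type R)
  (Q : R.-pker (T * R)%type ~> O) (cand : O -> seq R) (Y : set R) : \bar R :=
  ess_sup P (fun z : T * R =>
    ereal_sup [set Q z [set w | y' \in cand w] | y' in [set y' | Y y' /\ y' <> z.2]]).

From HB Require Import structures.
From mathcomp Require Import all_boot all_order all_algebra.
From mathcomp Require Import all_classical all_reals all_analysis.
From mathcomp Require Import ess_sup_inf kernel measurable_realfun.
Import Order.TTheory GRing.Theory Num.Theory.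
Local Open Scope classical_set_scope.
Local Open Scope ring_scope.
Local Open Scope ereal_scope.

(* Since l(a, b) = 0 exactly when a = b, the risk of f vanishes iff f predicts
   the true label almost surely, and R_min(f) vanishes iff f(x) is almost
   surely a candidate.  The realizable f* therefore has R_min(f* ) = 0, and so
   does the R_min-minimiser f*_min.  If f*_min(x) differed from the true label
   y on a set of positive mass, then at such (x, y) the wrong label f*_min(x)
   would lie in S with probability one, i.e. the ambiguity degree would be at
   least 1. *)

Section measure_facts.
Context d (T : measurableType d) (R : realType).
Variable mu : {measure set T -> \bar R}.

Lemma ge0_integral_eq0P (f : T -> \bar R) :
  measurable_fun [set: T] f -> (forall x, 0 <= f x) ->
  \int[mu]_x f x = 0 <-> {ae mu, forall x, f x = 0}.
Proof.
move=> mf f_ge0.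
have -> : \int[mu]_x f x = \int[mu]_(x in setT) `|f x|.
  by apply: eq_integral => x _; rewrite gee0_abs.
rewrite (ae_eq_integral_abs mu measurableT mf).
by split; apply: filterS => x; [exact|move=> fx0 _].
Qed.

Lemma ae_measure_setT (A : set T) :
  measurable A -> {ae mu, forall x, A x} -> mu A = mu setT.
Proof.
move=> mA [N [mN N0 notA_N]].
apply/eqP; rewrite eq_le le_measure ?inE //=.
have AN_cover : setT `<=` A `|` N.
  by move=> x _; have [Ax|nAx] := pselect (A x); [left|right; exact: notA_N].
apply: (le_trans (le_measure _ _ _ AN_cover)); rewrite ?inE //.
  exact: measurableU.
apply: (le_trans (measureU2 mu mA mN)).
by rewrite [X in _ + X](_ : _ = 0) ?adde0.
Qed.

End measure_facts.

Section min_loss.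
Context {R : realType} {l : R -> R -> R}.
Hypothesis l_ge0 : forall a b, (0 <= l a b)%R.
Hypothesis l_eq0 : forall a b, l a b = 0%R <-> a = b.

Lemma lmin_ge0 a s : 0 <= lmin l a s.
Proof.
apply: (big_ind (fun x => 0 <= x)) => [|x y x0 y0|y _]; first exact: leey.
  by rewrite le_min x0 y0.
by rewrite lee_fin.
Qed.

Lemma lmin_eq0 a s : lmin l a s = 0 <-> a \in s.
Proof.
elim: s => [|y s IH]; first by rewrite /lmin big_nil in_nil.
rewrite /lmin big_cons -/(lmin l a s) in_cons.
have m_ge0 := lmin_ge0 a s.
have ly_ge0 : 0 <= (l a y)%:E by rewrite lee_fin.
split => [|/orP[/eqP <-|/IH m0]].
- rewrite /Order.min; case: ifP => _ => [[/l_eq0 ->]|/IH ->];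
    by rewrite ?eqxx ?orbT.
- have -> : l a a = 0%R by exact/l_eq0.
  by apply/eqP; rewrite eq_le ge_min lexx le_min m_ge0 lexx.
- by apply/eqP; rewrite m0 eq_le ge_min lexx orbT le_min ly_ge0 lexx.
Qed.

Hypothesis ml : measurable_fun setT (fun ab : R * R => l ab.1 ab.2).

Lemma measurable_lmin d (X : measurableType d) (g : X -> R) (c : X -> seq R) :
  measurable_fun setT g ->
  (forall n, measurable [set x | size (c x) = n]) ->
  (forall k, measurable_fun setT (fun x => nth 0%R (c x) k)) ->
  measurable_fun setT (fun x => lmin l (g x) (c x)).
Proof.
move=> mg m_size m_nth.
pose h n x := \big[Order.min/+oo]_(k < n) (l (g x) (nth 0%R (c x) k))%:E.
have h_size x : lmin l (g x) (c x) = h (size (c x)) x.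
  by rewrite /lmin (big_nth 0%R) big_mkord.
have mh n : measurable_fun setT (h n).
  rewrite /h; elim: n => [|n IH].
    by under eq_fun do rewrite big_ord0; exact: measurable_cst.
  under eq_fun do rewrite big_ord_recr /=.
  apply: measurable_mine => //; apply/measurable_EFinP.
  exact: measurableT_comp ml (measurable_fun_pair mg (m_nth n)).
move=> _ B mB; rewrite setTI.
have -> : (fun x => lmin l (g x) (c x)) @^-1` B =
    \bigcup_n ([set x | size (c x) = n] `&` h n @^-1` B).
  apply/seteqP; split => x /=; rewrite h_size; first by exists (size (c x)).
  by case=> n _ [/= <-].
apply: bigcupT_measurable => n; apply: measurableI => //.
by rewrite -[_ @^-1` _]setTI; exact: mh.
Qed.

End min_loss.

Lemma measurable_mem_candidates d (O : measurableType d) (R : realType)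
    (cand : O -> seq R) (a : R) :
  measurable_candidates cand -> measurable [set w | a \in cand w].
Proof.
move=> [m_size m_nth].
have -> : [set w | a \in cand w] = \bigcup_k
    ([set w | (k < size (cand w))%N] `&`
     (fun w => nth 0%R (cand w) k) @^-1` [set a]).
  apply/seteqP; split => w /=; first by case/(nthP 0%R) => k k_lt <-; exists k.
  by case=> k _ [k_lt <-]; apply/(nthP 0%R); exists k.
apply: bigcupT_measurable => k; apply: measurableI.
  rewrite (_ : [set w | _] = \bigcup_(n in [set n | (k < n)%N])
                               [set w | size (cand w) = n]).
    exact: bigcup_measurable.
  apply/seteqP; split => w /=; first by exists (size (cand w)).
  by case=> n /= k_lt ->.
by rewrite -[_ @^-1` _]setTI; exact: m_nth (measurable_set1 a).
Qed.

Section partial_label_risks.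
Context {R : realType} {dT dO : measure_display}
  {T : measurableType dT} {O : measurableType dO}.
Context {Y : set R} {P : probability (T * R)%type R}
  {Q : R.-pker (T * R)%type ~> O} {cand : O -> seq R} {l : R -> R -> R}.
Hypothesis m_cand : measurable_candidates cand.
Hypothesis l_ge0 : forall a b, (0 <= l a b)%R.
Hypothesis l_eq0 : forall a b, l a b = 0%R <-> a = b.
Hypothesis ml : measurable_fun setT (fun ab : R * R => l ab.1 ab.2).

Lemma risk_eq0P {f : T -> R} : measurable_fun setT f ->
  risk P l f = 0 <-> {ae P, forall z, f z.1 = z.2}.
Proof.
move=> mf; rewrite /risk ge0_integral_eq0P //.
- by split; apply: filterS => z; [case=> /l_eq0|move=> /l_eq0 ->].
- apply/measurable_EFinP.
  exact: measurableT_comp ml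
    (measurable_fun_pair (measurableT_comp mf measurable_fst) measurable_snd).
- by move=> z; rewrite lee_fin.
Qed.

Let measurable_cond_risk_min (f : T -> R) : measurable_fun setT f ->
  measurable_fun setT (fun z => \int[Q z]_w lmin l (f z.1) (cand w)).
Proof.
move=> mf.
pose k (p : (T * R) * O) := lmin l (f p.1.1) (cand p.2).
apply: (measurable_fun_integral_finite_kernel k Q
  (fun p => lmin_ge0 l_ge0 _ _)).
apply: (@measurable_lmin _ _ ml _ _ (fun p => f p.1.1) (fun p => cand p.2)).
- exact: measurableT_comp mf (measurableT_comp measurable_fst measurable_fst).
- move=> n; rewrite -[X in measurable X]setTI.
  exact: measurable_snd measurableT _ (m_cand.1 n).
- by move=> i; exact: measurableT_comp (m_cand.2 i) measurable_snd.
Qed.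

Lemma risk_min_ge0 (f : T -> R) : 0 <= risk_min P Q cand l f.
Proof.
apply: integral_ge0 => z _; apply: integral_ge0 => w _.
exact: (lmin_ge0 l_ge0 _ _).
Qed.

Lemma risk_min_eq0P {f : T -> R} : measurable_fun setT f ->
  risk_min P Q cand l f = 0 <->
  {ae P, forall z, {ae Q z, forall w, f z.1 \in cand w}}.
Proof.
move=> mf; rewrite /risk_min ge0_integral_eq0P //; last 2 first.
- exact: measurable_cond_risk_min.
- by move=> z; apply: integral_ge0 => w _; exact: (lmin_ge0 l_ge0 _ _).
have cond_eq0 z : \int[Q z]_w lmin l (f z.1) (cand w) = 0 <->
    {ae Q z, forall w, f z.1 \in cand w}.
  rewrite ge0_integral_eq0P; last 2 first.
  - exact: (@measurable_lmin _ _ ml _ _ (fun=> f z.1) cand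
      (measurable_cst _) m_cand.1 m_cand.2).
  - by move=> w; exact: (lmin_ge0 l_ge0 _ _).
  by split; apply: filterS => w /(lmin_eq0 l_ge0 l_eq0).
by split; apply: filterS => z /cond_eq0.
Qed.

Lemma ambiguity_degree_ge : {ae P, forall z y', Y y' -> y' <> z.2 ->
  Q z [set w | y' \in cand w] <= ambiguity_degree P Q cand Y}.
Proof.
apply: filterS (ess_sup_ge _ _) => z + y' Yy' y'_neq.
by apply: le_trans; apply: ereal_sup_ubound; exists y'.
Qed.

Hypothesis cand_Y : forall w y, y \in cand w -> Y y.

Lemma risk_min_eq0_ae {f : T -> R} : measurable_fun setT f ->
  ambiguity_degree P Q cand Y < 1 ->
  risk_min P Q cand l f = 0 -> {ae P, forall z, f z.1 = z.2}.
Proof.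
move=> mf gamma_lt1 /(risk_min_eq0P mf).
apply: filterS2 ambiguity_degree_ge => z gamma_ge f_cand.
apply: contrapT => f_neq.
have Qz1 : Q z [set w | f z.1 \in cand w] = 1.
  rewrite ae_measure_setT ?prob_kernel //.
  exact: measurable_mem_candidates.
have [w fw] : [set w | f z.1 \in cand w] !=set0.
  apply/set0P/eqP => cand0.
  by move: (@lte01 R); rewrite -Qz1 cand0 measure0 ltxx.
have := gamma_ge _ (cand_Y w _ fw) f_neq.
by rewrite Qz1 leNgt gamma_lt1.
Qed.

End partial_label_risks.

Theorem theorem1 (R : realType) (dT dO : measure_display)
  (T : measurableType dT) (O : measurableType dO)
  (Y : set R)
  (P : probability (T * R)%type R)
  (Q : R.-pker (T * R)%type ~> O)
  (cand : O -> seq R)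
  (l : R -> R -> R)
  (F : set (T -> R)) (fstar fmin : T -> R) :
  (* p(x,y) is a distribution on X x Y *)
  {ae P, forall z, Y z.2} ->
  (* candidate sets: measurable random finite subsets of Y containing y *)
  measurable_candidates cand ->
  (forall w y, y \in cand w -> Y y) ->
  {ae P, forall z, {ae Q z, forall w, z.2 \in cand w}} ->
  (* ambiguity degree *)
  ambiguity_degree P Q cand Y < 1 ->
  (* regression loss *)
  (forall a b, (0 <= l a b)%R) ->
  (forall a b, l a b = 0%R <-> a = b) ->
  measurable_fun setT (fun ab : R * R => l ab.1 ab.2) ->
  (* hypothesis space of measurable models *)
  (forall f, F f -> measurable_fun setT f) ->
  (* f* = argmin_F R, with R(f* ) = 0 *)
  F fstar -> (forall f, F f -> risk P l fstar <= risk P l f) ->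
  risk P l fstar = 0 ->
  (* f*_min = argmin_F R_min *)
  F fmin -> (forall f, F f -> risk_min P Q cand l fmin <= risk_min P Q cand l f) ->
  {ae P, forall z, fmin z.1 = fstar z.1} /\ risk P l fmin = risk P l fstar.
Proof.
move=> _ m_cand cand_Y true_cand gamma_lt1 l_ge0 l_eq0 ml mF
  Fstar _ risk_fstar Fmin fmin_opt.
have [mstar mmin] := (mF _ Fstar, mF _ Fmin).
have fstar_label := (risk_eq0P l_ge0 l_eq0 ml mstar).1 risk_fstar.
have risk_min_fstar : risk_min P Q cand l fstar = 0.
  apply/(risk_min_eq0P m_cand l_ge0 l_eq0 ml mstar).
  by apply: filterS2 fstar_label true_cand => z ->.
have risk_min_fmin : risk_min P Q cand l fmin = 0.
  apply/eqP; rewrite eq_le risk_min_ge0 // andbT -risk_min_fstar.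
  exact: fmin_opt.
have fmin_label := risk_min_eq0_ae m_cand l_ge0 l_eq0 ml cand_Y mmin
  gamma_lt1 risk_min_fmin.
split; first by apply: filterS2 fmin_label fstar_label => z -> ->.
by rewrite risk_fstar; apply/(risk_eq0P l_ge0 l_eq0 ml mmin).
Qed.
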